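(* For every nonnegative integer $n$, $$\sum_{k=0}^{\infty}(-1)^k(4k+1)\,\frac{(-4n)_k\,(-3n+\tfrac18)_k\,(\tfrac12)_k}{k!\,(3n+\tfrac{11}{8})_k\,(4n+\tfrac32)_k}=\left(\frac{2^8 3^3}{7^7}\right)^n\frac{(\tfrac{11}{24})_n(\tfrac38)_n(\tfrac78)_n(\tfrac{19}{24})_n(\tfrac98)_n^2}{(\tfrac{11}{56})_n(\tfrac{43}{56})_n(\tfrac{19}{56})_n(\tfrac{51}{56})_n(\tfrac{27}{56})_n(\tfrac{59}{56})_n}.$$ (The sum is finite, since $(-4n)_k=0$ for $k>4n$.)
   Context: $(a)_j=\Gamma(a+j)/\Gamma(a)=a(a+1)\cdots(a+j-1)$ denotes the rising factorial (Pochhammer symbol), with $(a)_0=1$. *)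

From HB Require Import structures.
From mathcomp Require Import all_boot all_order all_algebra.
Set Implicit Arguments. Unset Strict Implicit. Unset Printing Implicit Defensive.
Import Order.TTheory GRing.Theory Num.Theory.
Local Open Scope ring_scope.

Definition poch (a : rat) (j : nat) : rat := \prod_(i < j) (a + i%:R).

From HB Require Import structures.
From mathcomp Require Import all_boot all_order all_algebra.
From mathcomp Require Import ring lra.
Import Order.TTheory GRing.Theory Num.Theory.
Local Open Scope ring_scope.

(* Proof by creative telescoping (Zeilberger's algorithm) and induction on n.
   Let t(n, k) be the summand, S(n) = sum_k t(n, k), C(n) the closed form and
   r(n) = C(n+1) / C(n), a rational function of n.
   - t(n, k) = 0 for k > 4n, so S(n) is the partial sum up to 4n, and every
     longer partial sum equals it.
   - t(n+1, k) and t(n, k) are rational multiples (in n and k) of a single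
     hypergeometric core term c(n, k), the summand at n+1 without its factor
     4k+1; moreover c(n, k+1) d(n, k+1) = u(n, k) c(n, k) for polynomials u, d.
   - With the certificate R(n, k) produced by Zeilberger's algorithm, the
     partner G(n, k) = c(n, k) d(n, k) R(n, k) satisfies
     t(n+1, k) - r(n) t(n, k) = G(n, k+1) - G(n, k); after division by
     c(n, k) this is one identity of rational functions, proved by [field].
   - G(n, 0) = 0 = G(n, 4n+5), so summing over k gives S(n+1) = r(n) S(n);
     C(n) satisfies the same recurrence, and S(0) = 1 = C(0). *)

Lemma poch0 (a : rat) : poch a 0 = 1.
Proof. by rewrite /poch big_ord0. Qed.

Lemma pochS (a : rat) (k : nat) : poch a k.+1 = poch a k * (a + k%:R).
Proof. by rewrite /poch big_ord_recr. Qed.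

Lemma poch3 (a : rat) : poch a 3 = a * (a + 1) * (a + 2).
Proof. by rewrite !pochS poch0 mul1r addr0. Qed.

Lemma poch4 (a : rat) : poch a 4 = a * (a + 1) * (a + 2) * (a + 3).
Proof. by rewrite pochS poch3. Qed.

Lemma poch_add (a : rat) (m k : nat) : poch a (m + k) = poch a m * poch (a + m%:R) k.
Proof.
elim: k => [|k IHk]; first by rewrite addn0 poch0 mulr1.
by rewrite addnS !pochS IHk natrD addrA mulrA.
Qed.

Lemma poch_comm (a : rat) (m k : nat) :
  poch a k * poch (a + k%:R) m = poch a m * poch (a + m%:R) k.
Proof. by rewrite -!poch_add addnC. Qed.

(* Shifting the parameter of a Pochhammer symbol by an integer m, upwards or
   downwards, multiplies it by a ratio of Pochhammer symbols of length m; this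
   is how terms at n and at n+1 are compared. *)
Lemma poch_shift_up (a b : rat) (m k : nat) : b = a + m%:R -> poch a m != 0 ->
  poch b k = poch a k * poch (a + k%:R) m / poch a m.
Proof. by move=> -> nz; rewrite poch_comm [poch a m * _]mulrC mulfK. Qed.

Lemma poch_shift_down (a b : rat) (m k : nat) : b = a + m%:R -> poch (a + k%:R) m != 0 ->
  poch a k = poch a m * poch b k / poch (a + k%:R) m.
Proof. by move=> -> nz; rewrite -poch_comm mulfK. Qed.

Lemma poch_gt0 (a : rat) (k : nat) : 0 < a -> 0 < poch a k.
Proof.
move=> a_gt0; rewrite /poch; apply: prodr_gt0 => i _.
by rewrite (lt_le_trans a_gt0) // lerDl.
Qed.

Lemma poch_eq0 (a : rat) (k i : nat) : (i < k)%N -> a + i%:R = 0 -> poch a k = 0.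
Proof. by move=> lt_ik ai0; rewrite /poch (bigD1 (Ordinal lt_ik)) //= ai0 mul0r. Qed.

Lemma sum_beyond_support {V : nmodType} {f : nat -> V} {d N : nat} :
  (forall k, (d < k)%N -> f k = 0) -> (d <= N)%N ->
  \sum_(k < N.+1) f k = \sum_(k < d.+1) f k.
Proof.
move=> f0 le_dN; rewrite -!(big_mkord xpredT) (@big_cat_nat _ _ _ d.+1 0 N.+1) //=.
rewrite [X in _ + X]big1_seq ?addr0 // => k /andP[_].
by rewrite mem_index_iota => /andP[lt_dk _]; apply: f0.
Qed.

Lemma creative_telescoping {R : pzRingType} {f g G : nat -> R} {c : R} {M : nat} :
  (forall k, g k - c * f k = G k.+1 - G k) -> G 0 = 0 -> G M.+1 = 0 ->
  \sum_(k < M.+1) g k = c * \sum_(k < M.+1) f k.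
Proof.
move=> step G0 GM; apply/eqP; rewrite -subr_eq0 mulr_sumr -sumrB.
rewrite -(big_mkord xpredT (fun k => g k - c * f k)).
by rewrite (telescope_sumr_eq G _ (leq0n _) (fun k _ => step k)) GM G0 subrr.
Qed.

(* Side conditions of [field] below: products of factors that are positive
   Pochhammer symbols, factorials, or affine in n and k with a fixed sign
   for n, k >= 0. *)
Ltac nonzero_factors :=
  repeat match goal with
  | |- is_true (_ && _) => apply/andP; split
  | |- is_true (_ * _ != 0) => apply: mulf_neq0
  end;
  match goal with
  | |- is_true (poch _ _ != 0) => apply: lt0r_neq0; apply: poch_gt0; lra
  | |- is_true ((_`!)%:R != 0) => by rewrite pnatr_eq0 -lt0n fact_gt0
  | |- _ => first [apply: lt0r_neq0; lra | apply: ltr0_neq0; lra]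
  end.

Definition summand (n k : nat) : rat :=
  (-1) ^+ k * (4 * k%:R + 1) *
  (poch (- (4 * n%:R)) k * poch (- (3 * n%:R) + 1 / 8) k * poch (1 / 2) k /
   ((k`!)%:R * poch (3 * n%:R + 11 / 8) k * poch (4 * n%:R + 3 / 2) k)).

Definition closed_form (c : rat) (n : nat) : rat :=
  c ^+ n *
  (poch (11 / 24) n * poch (3 / 8) n * poch (7 / 8) n * poch (19 / 24) n *
     poch (9 / 8) n ^+ 2 /
   (poch (11 / 56) n * poch (43 / 56) n * poch (19 / 56) n * poch (51 / 56) n *
     poch (27 / 56) n * poch (59 / 56) n)).

Definition closed_form_ratio (c X : rat) : rat :=
  c * ((11 / 24 + X) * (3 / 8 + X) * (7 / 8 + X) * (19 / 24 + X) * (9 / 8 + X) ^+ 2) /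
  ((11 / 56 + X) * (43 / 56 + X) * (19 / 56 + X) * (51 / 56 + X) * (27 / 56 + X) *
   (59 / 56 + X)).

Definition geometric_factor : rat := (2 ^+ 8 * 3 ^+ 3) / 7 ^+ 7.

(* The core term c(n, k): the summand at n+1 without its factor 4k+1, with
   the parameters -4(n+1), -3(n+1)+1/8, 3(n+1)+11/8, 4(n+1)+3/2. *)
Definition core (n k : nat) : rat :=
  (-1) ^+ k * poch (- (4 * n%:R) - 4) k * poch (- (3 * n%:R) - 23 / 8) k * poch (1 / 2) k /
  ((k`!)%:R * poch (3 * n%:R + 35 / 8) k * poch (4 * n%:R + 11 / 2) k).

(* The polynomials u = core_num and d = core_den of the recurrence
   c(n, k+1) d(n, k+1) = u(n, k) c(n, k), at X = n and K = k. *)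
Definition core_num (X K : rat) : rat :=
  - ((K - 4 * X - 4) * (K - 3 * X - 23 / 8) * (K + 1 / 2)).

Definition core_den (X K : rat) : rat := K * (K + 3 * X + 27 / 8) * (K + 4 * X + 9 / 2).

(* t(n, k) / c(n, k) as a rational function of X = n and K = k. *)
Definition summand_ratio (X K : rat) : rat :=
  (4 * K + 1) *
  ((K - 4 * X - 4) * (K - 4 * X - 3) * (K - 4 * X - 2) * (K - 4 * X - 1)) /
  ((4 * X + 4) * (4 * X + 3) * (4 * X + 2) * (4 * X + 1)) *
  ((K - 3 * X - 23 / 8) * (K - 3 * X - 15 / 8) * (K - 3 * X - 7 / 8)) /
  (- ((3 * X + 23 / 8) * (3 * X + 15 / 8) * (3 * X + 7 / 8))) *
  ((3 * X + 11 / 8 + K) * (3 * X + 19 / 8 + K) * (3 * X + 27 / 8 + K)) /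
  ((3 * X + 11 / 8) * (3 * X + 19 / 8) * (3 * X + 27 / 8)) *
  ((4 * X + 3 / 2 + K) * (4 * X + 5 / 2 + K) * (4 * X + 7 / 2 + K) * (4 * X + 9 / 2 + K)) /
  ((4 * X + 3 / 2) * (4 * X + 5 / 2) * (4 * X + 7 / 2) * (4 * X + 9 / 2)).

(* Numerator of the telescoping certificate, as a polynomial in X = n and
   U = K (2K - 1): the series is well-poised, and the certificate is
   invariant under K |-> 1/2 - K. *)
Definition wz_numerator (X U : rat) : rat :=
  let c0 := - ((((((((((((31566630941097984%:R * X + 214122853816074240%:R) * X +
      654008568407654400%:R) * X + 1188384473104777216%:R) * X + 1429484875452252160%:R) * X
      + 1198036410435895296%:R) * X + 716609442508111872%:R) * X + 307925553042726912%:R) *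
      X + 94236455045342976%:R) * X + 20010028287314144%:R) * X + 2795330031346688%:R) * X +
      230419680766242%:R) * X + 8466233990445%:R) in
  let c1 := (((((((((1237348402593792%:R * X + 6569640897544192%:R) * X +
      15443403336581120%:R) * X + 21153459143180288%:R) * X + 18687147437195264%:R) * X +
      11120313088016384%:R) * X + 4513116226740224%:R) * X + 1233407723892736%:R) * X +
      217310427802272%:R) * X + 22311368082840%:R) * X + 1016039830908%:R in
  let c2 := - ((((((((41950489083904%:R * X + 173722459701248%:R) * X + 312690032508928%:R)
      * X + 319600731226112%:R) * X + 203089165533184%:R) * X + 82300604729344%:R) * X +
      20828178609920%:R) * X + 3022599602080%:R) * X + 194045745688%:R) in
  let c3 := (((((1099352244224%:R * X + 3403482660864%:R) * X + 4447844827136%:R) * X +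
      3139618275328%:R) * X + 1266886940672%:R) * X + 278759560704%:R) * X + 26502992032%:R
      in
  let c4 := - ((((19893583872%:R * X + 41292922880%:R) * X + 33941225472%:R) * X +
      12976128000%:R) * X + 2005552128%:R) in
  let c5 := (216006656%:R * X + 225968128%:R) * X + 74678272%:R in
  let c6 := - 1048576%:R in
  c0 + U * (c1 + U * (c2 + U * (c3 + U * (c4 + U * (c5 + U * c6))))).

(* The certificate R(X, K).  It is locked so that unification never unfolds
   its large integer coefficients. *)
HB.lock Definition wz_certificate (X K : rat) : rat :=
  32 * wz_numerator X (K * (2 * K - 1)) /
  (7 * ((56 * X + 11) * (56 * X + 19) * (56 * X + 27) * (56 * X + 43) * (56 * X + 51) *
        (56 * X + 59)) *
       ((4 * X + 1) * (4 * X + 2) * (4 * X + 3) * (4 * X + 4)) *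
       ((24 * X + 7) * (24 * X + 15) * (24 * X + 23)) * (8 * X + 5)).

(* The certificate identity: after division by c(n, k), the telescoping
   relation is this identity of rational functions. *)
Lemma wz_certificate_identity (X K : rat) : 0 <= X ->
  (4 * K + 1) - closed_form_ratio geometric_factor X * summand_ratio X K =
  core_num X K * wz_certificate X (K + 1) - core_den X K * wz_certificate X K.
Proof.
move=> X_ge0; rewrite /closed_form_ratio /geometric_factor /summand_ratio /core_num /core_den.
rewrite wz_certificate.unlock /wz_numerator; cbv zeta.
field; nonzero_factors.
Qed.

(* The factor (-4n)_k makes the series terminate at k = 4n. *)
Lemma summand_vanish (n k : nat) : (4 * n < k)%N -> summand n k = 0.
Proof.
move=> lt_4n_k; rewrite /summand (@poch_eq0 _ _ (4 * n)) ?mul0r ?mulr0 //.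
by rewrite natrM addNr.
Qed.

Lemma summand_succ (n k : nat) : summand n.+1 k = (4 * k%:R + 1) * core n k.
Proof.
rewrite /summand /core.
have -> : - (4 * n.+1%:R) = - (4 * n%:R) - 4 :> rat by rewrite -[n.+1%:R]natr1; field.
have -> : - (3 * n.+1%:R) + 1 / 8 = - (3 * n%:R) - 23 / 8 :> rat by rewrite -[n.+1%:R]natr1; field.
have -> : 3 * n.+1%:R + 11 / 8 = 3 * n%:R + 35 / 8 :> rat by rewrite -[n.+1%:R]natr1; field.
have -> : 4 * n.+1%:R + 3 / 2 = 4 * n%:R + 11 / 2 :> rat by rewrite -[n.+1%:R]natr1; field.
by rewrite !mulrA [(-1) ^+ k * _]mulrC.
Qed.

(* Each parameter of t(n, k) differs from that of c(n, k) by an integer, so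
   the ratio of the two is rational in n and k. *)
Lemma summand_as_core (n k : nat) : summand n k = summand_ratio n%:R k%:R * core n k.
Proof.
have X_ge0 : 0 <= n%:R :> rat := ler0n _ _.
have K_ge0 : 0 <= k%:R :> rat := ler0n _ _.
have shift1 : poch (- (4 * n%:R)) k =
    poch (- (4 * n%:R) - 4) k * poch (- (4 * n%:R) - 4 + k%:R) 4 / poch (- (4 * n%:R) - 4) 4.
  by apply: poch_shift_up; [ring | rewrite poch4; nonzero_factors].
have shift2 : poch (- (3 * n%:R) + 1 / 8) k =
    poch (- (3 * n%:R) - 23 / 8) k * poch (- (3 * n%:R) - 23 / 8 + k%:R) 3 /
    poch (- (3 * n%:R) - 23 / 8) 3.
  by apply: poch_shift_up; [field | rewrite poch3; nonzero_factors].
have shift3 : poch (3 * n%:R + 11 / 8) k =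
    poch (3 * n%:R + 11 / 8) 3 * poch (3 * n%:R + 35 / 8) k / poch (3 * n%:R + 11 / 8 + k%:R) 3.
  by apply: poch_shift_down; [field | rewrite poch3; nonzero_factors].
have shift4 : poch (4 * n%:R + 3 / 2) k =
    poch (4 * n%:R + 3 / 2) 4 * poch (4 * n%:R + 11 / 2) k / poch (4 * n%:R + 3 / 2 + k%:R) 4.
  by apply: poch_shift_down; [field | rewrite poch4; nonzero_factors].
rewrite /summand /core /summand_ratio shift1 shift2 shift3 shift4 !poch3 !poch4.
field; nonzero_factors.
Qed.

Lemma core_succ (n k : nat) :
  core n k.+1 * core_den n%:R k.+1%:R = core_num n%:R k%:R * core n k.
Proof.
have X_ge0 : 0 <= n%:R :> rat := ler0n _ _.
have K_ge0 : 0 <= k%:R :> rat := ler0n _ _.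
rewrite /core /core_num /core_den !pochS factS natrM -[k.+1%:R]natr1 exprS.
field; nonzero_factors.
Qed.

(* c(n, k) has the factor (-4n-4)_k, which vanishes for k > 4n+4. *)
Lemma core_vanish (n : nat) : core n (4 * n.+1).+1 = 0.
Proof.
rewrite /core (@poch_eq0 _ _ (4 * n.+1)) ?mulr0 ?mul0r //.
by rewrite natrM -[n.+1%:R]natr1; ring.
Qed.

Definition wz_partner (n k : nat) : rat :=
  core n k * core_den n%:R k%:R * wz_certificate n%:R k%:R.

Lemma wz_partner_succ (n k : nat) :
  wz_partner n k.+1 = core_num n%:R k%:R * core n k * wz_certificate n%:R (k%:R + 1).
Proof. by rewrite /wz_partner core_succ -[k.+1%:R]natr1. Qed.

Lemma wz_step (n k : nat) :
  summand n.+1 k - closed_form_ratio geometric_factor n%:R * summand n k =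
  wz_partner n k.+1 - wz_partner n k.
Proof.
rewrite summand_succ summand_as_core wz_partner_succ /wz_partner.
move: (wz_certificate_identity n%:R k%:R (ler0n rat n)).
(* Only the linear structure matters: abstract the factors so that [ring]
   treats them as opaque atoms. *)
move: (core n k) (closed_form_ratio _ _) (summand_ratio _ _) (core_num _ _) (core_den _ _).
move: (wz_certificate _ (k%:R + 1)) (wz_certificate _ k%:R) => v1 v0 c r p a d cert.
transitivity (c * ((4 * k%:R + 1) - r * p)); first by ring.
by rewrite cert; ring.
Qed.

(* G vanishes at both ends of the range 0 <= k <= 4n+4, through d(n, 0) = 0
   and c(n, 4n+5) = 0. *)
Lemma wz_partner_start (n : nat) : wz_partner n 0 = 0.
Proof. by rewrite /wz_partner /core_den !mul0r mulr0 mul0r. Qed.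

Lemma wz_partner_end (n : nat) : wz_partner n (4 * n.+1).+1 = 0.
Proof. by rewrite /wz_partner core_vanish !mul0r. Qed.

Lemma partial_sum_succ (n : nat) :
  \sum_(k < (4 * n.+1).+1) summand n.+1 k =
  closed_form_ratio geometric_factor n%:R * \sum_(k < (4 * n).+1) summand n k.
Proof.
rewrite (creative_telescoping (wz_step n) (wz_partner_start n) (wz_partner_end n)).
by rewrite (sum_beyond_support (summand_vanish n)) // leq_mul2l leqnSn orbT.
Qed.

Lemma closed_form_succ (c : rat) (n : nat) :
  closed_form c n.+1 = closed_form_ratio c n%:R * closed_form c n.
Proof.
have X_ge0 : 0 <= n%:R :> rat := ler0n _ _.
rewrite /closed_form /closed_form_ratio !pochS exprS.
field; nonzero_factors.
Qed.

Lemma summand0 (n : nat) : summand n 0 = 1.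
Proof. by rewrite /summand !poch0 fact0 mulr1n expr0 mulr0 add0r !mul1r ?invr1. Qed.

Lemma closed_form0 (c : rat) : closed_form c 0 = 1.
Proof. by rewrite /closed_form !poch0 expr0 expr1n !mul1r ?invr1. Qed.

Lemma summation (n : nat) :
  \sum_(k < (4 * n).+1) summand n k = closed_form geometric_factor n.
Proof.
elim: n => [|n IHn]; first by rewrite big_ord1 summand0 closed_form0.
by rewrite partial_sum_succ closed_form_succ IHn.
Qed.

Theorem theorem10 (n : nat) (N : nat) (hN : (4 * n <= N)%N) :
  \sum_(k < N.+1)
     (-1) ^+ k * (4 * k%:R + 1) *
     (poch (- (4 * n%:R)) k * poch (- (3 * n%:R) + 1 / 8) k * poch (1 / 2) k /
      ((k`!)%:R * poch (3 * n%:R + 11 / 8) k * poch (4 * n%:R + 3 / 2) k))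
  = ((2 ^+ 8 * 3 ^+ 3) / 7 ^+ 7) ^+ n *
    (poch (11 / 24) n * poch (3 / 8) n * poch (7 / 8) n * poch (19 / 24) n *
       poch (9 / 8) n ^+ 2 /
     (poch (11 / 56) n * poch (43 / 56) n * poch (19 / 56) n * poch (51 / 56) n *
       poch (27 / 56) n * poch (59 / 56) n)).
Proof. exact: etrans (sum_beyond_support (summand_vanish n) hN) (summation n). Qed.
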